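(* Let $N\geq 1$ be an integer and let $k_N=\dfrac{1}{2^{N+4}}$. Let $(X,Y;E)$ be a finite bipartite graph (so $X,Y$ are finite disjoint sets and $E\subseteq X\times Y$) which has VC-minimal complexity $<N$. Then there exist $X'\subseteq X$ and $Y'\subseteq Y$ with $|X'|\geq k_N|X|$ and $|Y'|\geq k_N|Y|$ such that either $X'\times Y'\subseteq E$ or $(X'\times Y')\cap E=\emptyset$.
   Context: For $a\in X$ and $S\subseteq Y$ write $E(a,S)=\{b\in S:(a,b)\in E\}$. A family $\Psi$ of subsets of a set $U$ is a directed family if for any $B,B'\in\Psi$ one has $B\subseteq B'$ or $B'\subseteq B$ or $B\cap B'=\emptyset$; members of $\Psi$ are called $\Psi$-balls. A $\Psi$-Swiss cheese is a set of the form $B\setminus(B_1\cup\dots\cup B_n)$ with $B,B_1,\dots,B_n$ $\Psi$-balls ($n\ge 0$); $B$ is its outer ball and the $B_i$ are its holes. The bipartite graph $(X,Y;E)$ has VC-minimal complexity $<N$ if there is a directed family $\Psi$ of subsets of $Y$ such that for every $a\in X$, $E(a,Y)$ is a finite disjoint union of $\Psi$-Swiss cheeses $E(a,Y)=\dot\bigcup_{k=1}^{s}\big(B_{k1}\setminus(B_{k2}\cup\dots\cup B_{kd(k)})\big)$ in which the total number of outer balls plus holes satisfies $d(1)+\dots+d(s)<N$ (an empty union, $s=0$, is allowed). *)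

From mathcomp Require Import all_boot all_order all_algebra.
Set Implicit Arguments. Unset Strict Implicit. Unset Printing Implicit Defensive.

Section VCmin.
Variables (X Y : finType).

Definition nbhd (E : X -> Y -> bool) (a : X) : {set Y} := [set b | E a b].

Definition directed_family (Psi : {set {set Y}}) : Prop :=
  forall B B', B \in Psi -> B' \in Psi ->
    [|| B \subset B', B' \subset B | [disjoint B & B']].

(* A Swiss cheese given by its outer ball c.1 and its list of holes c.2:
   c.1 \ (union of the holes). *)
Definition swiss_cheese (c : {set Y} * seq {set Y}) : {set Y} :=
  c.1 :\: \bigcup_(H <- c.2) H.

Definition cheese_size (c : {set Y} * seq {set Y}) : nat := (size c.2).+1.

Definition vcmin_complexity_lt (E : X -> Y -> bool) (N : nat) : Prop :=
  exists Psi : {set {set Y}}, directed_family Psi /\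
    forall a : X, exists cs : seq ({set Y} * seq {set Y}),
      [/\ (forall c, c \in cs -> c.1 \in Psi /\ (forall H, H \in c.2 -> H \in Psi)),
          pairwise (fun c d => [disjoint swiss_cheese c & swiss_cheese d]) cs,
          nbhd E a = \bigcup_(c <- cs) swiss_cheese c
        & (\sum_(c <- cs) cheese_size c < N)%N].

End VCmin.

From mathcomp Require Import all_boot all_order all_algebra zify.
Import GRing.Theory Num.Theory.
Set Implicit Arguments. Unset Strict Implicit. Unset Printing Implicit Defensive.

(* A ball B cuts Z when it meets Z without containing it.  Each neighbourhood
   E(a,-) is a Boolean combination of the fewer than N balls of its cheese
   decomposition, so it is constant on any set that none of them cuts.
   In a directed family, every Z with |Z| >= 2 splits into two parts of size
   >= |Z|/3 that are never both cut by the same ball: take a minimal trace W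
   of a ball (or Z itself) with |W| >= |Z|/3; its maximal proper subtraces
   and singletons partition W into pieces smaller than |Z|/3, and a greedy
   union of pieces lands between |Z|/3 and 2|Z|/3.  Hence for every a one of
   the parts is cut by fewer than half of the balls of a cutting Z; keeping
   the part preferred by half of the a's, d rounds with N <= 2^d leave
   |Z| >= 3^-d |Y| and |A| >= 2^-d |X| with nothing cut, and a final majority
   vote on the constant value of E(a,-) on Z yields the homogeneous pair.
   For d = ceil(log2 N) one has 2d <= N + 1, so 3^d <= 4^d <= 2^(N+4). *)

Section Cuts.
Variable T : finType.
Implicit Types (B Z U : {set T}) (S : {set {set T}}).

Definition cuts B Z := ~~ [disjoint B & Z] && ~~ (Z \subset B).

Definition cutset S Z := [set B in S | cuts B Z].

Lemma cutsN B Z : ~~ cuts B Z = [disjoint B & Z] || (Z \subset B).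
Proof. by rewrite negb_and !negbK. Qed.

Lemma cutsS B U Z : U \subset Z -> cuts B U -> cuts B Z.
Proof.
move=> sUZ /andP[meet not_sub]; apply/andP; split.
  by apply: contra meet; apply: disjointWr.
by apply: contra not_sub; apply: subset_trans.
Qed.

Lemma cuts_card_le1 B Z : #|Z| <= 1 -> ~~ cuts B Z.
Proof.
move=> /card_le1_eqP Z_eq; rewrite cutsN -setI_eq0.
case: (set_0Vmem (B :&: Z)) => [-> | [z /setIP[zB zZ]]]; first by rewrite eqxx.
by apply/orP; right; apply/subsetP => y yZ; rewrite -(Z_eq y z yZ zZ).
Qed.

Lemma uncut_mem_eq B Z y y' :
  ~~ cuts B Z -> y \in Z -> y' \in Z -> (y \in B) = (y' \in B).
Proof.
rewrite cutsN => /orP[dis | sub] yZ y'Z.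
  by rewrite disjoint_sym in dis; rewrite (disjointFr dis yZ) (disjointFr dis y'Z).
by rewrite (subsetP sub y yZ) (subsetP sub y' y'Z).
Qed.

Lemma card_cutset_split S U Z :
  U \subset Z ->
  (forall B, B \in S -> ~~ cuts B U || ~~ cuts B (Z :\: U)) ->
  #|cutset S U| + #|cutset S (Z :\: U)| <= #|cutset S Z|.
Proof.
move=> sUZ uncut.
have disjoint_cuts : [disjoint cutset S U & cutset S (Z :\: U)].
  rewrite -setI_eq0; apply/eqP/setP => B; rewrite !inE.
  apply/negP => /andP[/andP[BS cutU] /andP[_ cutD]].
  by move: (uncut B BS); rewrite cutU cutD.
have := (leq_card_setU (cutset S U) (cutset S (Z :\: U))).2.
rewrite disjoint_cuts => /eqP <-; apply: subset_leq_card.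
apply/subsetP => B; rewrite !inE => /orP[] /andP[BS cutB]; rewrite BS /=.
  exact: cutsS cutB.
exact: cutsS (subsetDl _ _) cutB.
Qed.

End Cuts.

Lemma majority_half (T : finType) (A : {set T}) (p : pred T) :
  exists b : bool, #|A| <= 2 * #|[set a in A | p a == b]|.
Proof.
have split_A : #|[set a in A | p a == true]| + #|[set a in A | p a == false]| = #|A|.
  rewrite -(cardsID [set a | p a] A).
  by congr (_ + _); apply: eq_card => a; rewrite !inE; case: (p a); rewrite ?andbT ?andbF.
case: (leqP #|[set a in A | p a == true]| #|[set a in A | p a == false]|).
  by exists false; lia.
by exists true; lia.
Qed.

Lemma trivIset_subcover_between (T : finType) (P : {set {set T}}) (k n : nat) :
  0 < n -> trivIset P -> (forall K, K \in P -> k * #|K| < n) ->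
  n <= k * #|cover P| ->
  exists2 Q : {set {set T}}, Q \subset P & n <= k * #|cover Q| < 2 * n.
Proof.
move=> n_gt0; have [m] := ubnP #|P|; elim: m P => // m IH P cardP triP small large.
have [P0 | [K KP]] := set_0Vmem P.
  by move: large; rewrite P0 /cover big_set0 cards0; lia.
have triPK : trivIset (P :\ K) by apply: trivIsetS triP; apply: subD1set.
have card_cover : #|cover (P :\ K)| = #|cover P| - #|K|.
  by rewrite coverD1 // cardsDS // bigcup_sup.
have K_le : #|K| <= #|cover P| by apply/subset_leq_card/bigcup_sup.
have [largeK | smallK] := leqP n (k * #|cover (P :\ K)|).
  have cardPK : #|P :\ K| < m by move: cardP; rewrite [#|P|](cardsD1 K) KP.
  have smallPK K' : K' \in P :\ K -> k * #|K'| < n by move=> /setD1P[_ /small].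
  have [Q QPK HQ] := IH (P :\ K) cardPK triPK smallPK largeK.
  by exists Q => //; apply: subset_trans QPK (subD1set _ _).
have split_cover : k * #|cover P| = k * #|cover (P :\ K)| + k * #|K|.
  by rewrite card_cover -mulnDr subnK.
by exists P => //; have := small K KP; lia.
Qed.

Section DirectedFamilies.
Variable T : finType.
Implicit Types (F M Psi Q : {set {set T}}) (B C K W Z U : {set T}).

Definition maximal_members M : {set {set T}} := [set K | maxset [pred C | C \in M] K].

Lemma maximal_members_sub M : maximal_members M \subset M.
Proof. by apply/subsetP => K; rewrite inE => /maxsetp. Qed.

Lemma maximal_members_exists M C :
  C \in M -> exists2 K, K \in maximal_members M & C \subset K.
Proof.
move=> CM; have [K maxK CK] := maxset_exists (P := [pred C | C \in M]) CM.
by exists K; rewrite ?inE.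
Qed.

Lemma trivIset_maximal_members M : directed_family M -> trivIset (maximal_members M).
Proof.
move=> dirM; apply/trivIsetP => K K'.
rewrite !inE => /maxsetP[KM maxK] /maxsetP[K'M maxK'] neqKK'.
case/or3P: (dirM K K' KM K'M) => // [KK' | K'K].
  by rewrite (maxK K' K'M KK') eqxx in neqKK'.
by rewrite (maxK' K KM K'K) eqxx in neqKK'.
Qed.

Lemma cover_maximal_members M : cover (maximal_members M) = cover M.
Proof.
apply/eqP; rewrite eqEsubset; apply/andP; split.
  by apply/bigcupsP => K /(subsetP (maximal_members_sub M)); apply: bigcup_sup.
apply/bigcupsP => C /maximal_members_exists[K maxK CK].
exact: subset_trans CK (bigcup_sup _ maxK).
Qed.

Definition trace_family Psi Z : {set {set T}} := Z |: [set B :&: Z | B in Psi].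

Lemma trace_family_sub Psi Z W : W \in trace_family Psi Z -> W \subset Z.
Proof. by rewrite !inE => /predU1P[-> // | /imsetP[B _ ->]]; apply: subsetIr. Qed.

Lemma mem_trace_family Psi Z B : B \in Psi -> B :&: Z \in trace_family Psi Z.
Proof. by move=> BPsi; rewrite in_setU1 (imset_f (fun B => B :&: Z)) ?orbT. Qed.

Lemma directed_trace_family Psi Z :
  directed_family Psi -> directed_family (trace_family Psi Z).
Proof.
move=> dirPsi C W CF WF.
have [-> | neCZ] := eqVneq C Z; first by rewrite (trace_family_sub WF) orbT.
have [-> | neWZ] := eqVneq W Z; first by rewrite (trace_family_sub CF).
move: CF WF; rewrite !in_setU1 (negbTE neCZ) (negbTE neWZ) /=.
move=> /imsetP[B BPsi ->] /imsetP[B' B'Psi ->].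
case/or3P: (dirPsi B B' BPsi B'Psi) => [BB' | B'B | disBB'].
- by rewrite (setSI _ BB').
- by rewrite (setSI _ B'B) orbT.
- by rewrite (disjointWl (subsetIl _ _) (disjointWr (subsetIl _ _) disBB')) !orbT.
Qed.

Section Blocks.
Variables (F : {set {set T}}) (W : {set T}).
Hypotheses (dirF : directed_family F) (WF : W \in F).

Definition pieces : {set {set T}} := [set C in F | C \proper W] :|: [set [set y] | y in W].

Definition blocks := maximal_members pieces.

Lemma directed_pieces : directed_family pieces.
Proof.
have singleton_cmp y C : [|| [set y] \subset C, C \subset [set y] | [disjoint [set y] & C]].
  by rewrite sub1set disjoints1; case: (y \in C); rewrite ?orbT.
move=> C C'; rewrite !inE => /orP[/andP[CF _] | /imsetP[y _ ->]]; last first.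
  by move=> _; apply: singleton_cmp.
move=> /orP[/andP[C'F _] | /imsetP[y _ ->]]; first exact: dirF.
by have := singleton_cmp y C; rewrite disjoint_sym; case/or3P=> ->; rewrite ?orbT.
Qed.

Lemma trivIset_blocks : trivIset blocks.
Proof. exact/trivIset_maximal_members/directed_pieces. Qed.

Lemma cover_blocks : cover blocks = W.
Proof.
rewrite cover_maximal_members; apply/eqP; rewrite eqEsubset; apply/andP; split.
  apply/bigcupsP => C; rewrite !inE => /orP[/andP[_ /proper_sub] // | /imsetP[y yW ->]].
  by rewrite sub1set.
apply/subsetP => y yW; apply/bigcupP; exists [set y]; last by rewrite inE.
by rewrite !inE imset_f ?orbT.
Qed.

Lemma cover_sub_blocks Q : Q \subset blocks -> cover Q \subset W.
Proof.
move=> Qblocks; rewrite -cover_blocks.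
by apply/bigcupsP => K KQ; apply/bigcup_sup/(subsetP Qblocks).
Qed.

Lemma blocks_subcover_laminar Q C :
  Q \subset blocks -> C \in F ->
  [|| C \subset cover Q, [disjoint C & cover Q] | cover Q \subset C].
Proof.
move=> Qblocks CF; have QW := cover_sub_blocks Qblocks.
case/or3P: (dirF CF WF) => [CW | WC | disCW]; last 2 first.
- by rewrite (subset_trans QW WC) !orbT.
- by rewrite (disjointWr QW disCW) orbT.
have [-> | neCW] := eqVneq C W; first by rewrite QW !orbT.
have Cpiece : C \in pieces by rewrite !inE CF properEneq neCW CW.
have [K Kblock CK] := maximal_members_exists Cpiece.
have [KQ | KnQ] := boolP (K \in Q); first by rewrite (subset_trans CK (bigcup_sup _ KQ)).
apply/or3P; apply: Or32; apply: disjointWl CK _; apply: bigcup_disjoint => K' K'Q.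
apply: (trivIsetP trivIset_blocks) => //; first exact: (subsetP Qblocks).
by apply: contraNneq KnQ => ->.
Qed.

End Blocks.

Lemma uncut_of_laminar_trace B Z U :
  U \subset Z -> [|| B :&: Z \subset U, [disjoint B :&: Z & U] | U \subset B :&: Z] ->
  ~~ cuts B U || ~~ cuts B (Z :\: U).
Proof.
move=> UZ; case/or3P=> [BZU | disBZU | UBZ]; rewrite !cutsN.
- apply/orP; right; apply/orP; left; rewrite -setI_eq0; apply/eqP/setP => y.
  rewrite !inE; apply/negP => /and3P[yB /negP yU yZ].
  by apply: yU; apply: (subsetP BZU); rewrite inE yB.
- apply/orP; left; apply/orP; left; rewrite -setI_eq0; apply/eqP/setP => y.
  rewrite !inE; apply/negP => /andP[yB yU].
  have yBZ : y \in B :&: Z by rewrite inE yB (subsetP UZ).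
  by rewrite (disjointFr disBZU yBZ) in yU.
- by rewrite (subset_trans UBZ (subsetIl _ _)) !orbT.
Qed.

End DirectedFamilies.

Lemma directed_split (T : finType) (Psi : {set {set T}}) (Z : {set T}) :
  directed_family Psi -> 2 <= #|Z| ->
  exists U : {set T}, [/\ U \subset Z, #|Z| <= 3 * #|U|, #|Z| <= 3 * #|Z :\: U|
    & forall B, B \in Psi -> ~~ cuts B U || ~~ cuts B (Z :\: U)].
Proof.
move=> dirPsi Z_ge2; set n := #|Z|.
have [n_le3 | n_gt3] := leqP n 3.
  have [y yZ] : {y | y \in Z} by apply/sigW/card_gt0P; lia.
  have yZs : [set y] \subset Z by rewrite sub1set.
  exists [set y]; split => //.
  - by rewrite cards1; lia.
  - by rewrite cardsDS // cards1; lia.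
  - by move=> B _; rewrite cuts_card_le1 ?cards1.
pose F := trace_family Psi Z.
have dirF : directed_family F by apply: directed_trace_family.
have ZF : Z \in F by rewrite setU11.
pose large (W : {set T}) := (W \in F) && (n <= 3 * #|W|).
have largeZ : large Z by rewrite /large ZF; lia.
case: (arg_minnP (fun W : {set T} => #|W|) largeZ) => W /andP[WF W_large] W_min.
have WZ : W \subset Z := trace_family_sub WF.
have small_blocks K : K \in blocks F W -> 3 * #|K| < n.
  move/(subsetP (maximal_members_sub _)); rewrite /pieces in_setU in_set.
  case/orP=> [/andP[KF KW] | /imsetP[y _ ->]]; last by rewrite cards1; lia.
  rewrite ltnNge; apply/negP => K_large.
  have := W_min K; rewrite /large KF K_large => /(_ isT).
  by have := proper_card KW; lia.
have n_gt0 : 0 < n by lia.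
have W_cover_large : n <= 3 * #|cover (blocks F W)| by rewrite cover_blocks.
have [Q Qblocks U_size] :=
  trivIset_subcover_between n_gt0 (trivIset_blocks W dirF) small_blocks W_cover_large.
have UZ := subset_trans (cover_sub_blocks Qblocks) WZ.
exists (cover Q); split => //.
- lia.
- by rewrite cardsDS //; lia.
move=> B BPsi; apply: uncut_of_laminar_trace => //.
exact: (blocks_subcover_laminar dirF WF Qblocks (mem_trace_family Z BPsi)).
Qed.

Section Halving.
Variables (I T : finType) (Psi : {set {set T}}) (S : I -> {set {set T}}).
Hypotheses (dirPsi : directed_family Psi) (SPsi : forall a, S a \subset Psi).

Lemma halving_step d (Z : {set T}) (A : {set I}) :
  2 <= #|Z| -> (forall a, a \in A -> #|cutset (S a) Z| < 2 ^ d.+1) ->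
  exists (Z1 : {set T}) (A1 : {set I}),
    [/\ Z1 \subset Z, A1 \subset A, #|Z| <= 3 * #|Z1|, #|A| <= 2 * #|A1|
      & forall a, a \in A1 -> #|cutset (S a) Z1| < 2 ^ d].
Proof.
move=> Z_ge2 cutsA.
have [U [UZ U_large D_large uncutU]] := directed_split dirPsi Z_ge2.
have [b A_half] := majority_half A (fun a => #|cutset (S a) U| < 2 ^ d).
exists (if b then U else Z :\: U), [set a in A | (#|cutset (S a) U| < 2 ^ d) == b].
split => //.
- by case: (b); rewrite ?subsetDl.
- by apply/subsetP => a; rewrite inE => /andP[].
- by case: (b).
move=> a; rewrite inE => /andP[aA /eqP <-].
have := card_cutset_split UZ (fun B BSa => uncutU B (subsetP (SPsi a) B BSa)).
have := cutsA a aA; rewrite expnS.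
(* No ball cuts both parts, so their cut counts add up to less than 2 * 2 ^ d. *)
by case: ifPn => // /negbTE; rewrite ltnNge => /negbFE; lia.
Qed.

Lemma uncut_subrectangle d (Z : {set T}) (A : {set I}) :
  (forall a, a \in A -> #|cutset (S a) Z| < 2 ^ d) ->
  exists (Z' : {set T}) (A' : {set I}),
    [/\ Z' \subset Z, A' \subset A, #|Z| <= 3 ^ d * #|Z'|, #|A| <= 2 ^ d * #|A'|
      & forall a B, a \in A' -> B \in S a -> ~~ cuts B Z'].
Proof.
elim: d Z A => [|d IH] Z A cutsA.
  exists Z, A; split; rewrite ?expn0 ?mul1n //.
  move=> a B aA BSa; apply/negP => cutB.
  move: (cutsA a aA); rewrite ltnS leqn0 cards_eq0 => /eqP/setP/(_ B).
  by rewrite !inE BSa cutB.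
have [Z_le1 | Z_ge2] := leqP #|Z| 1.
  exists Z, A; split => //; rewrite ?leq_pmull ?expn_gt0 //.
  by move=> a B _ _; apply: cuts_card_le1.
have [Z1 [A1 [Z1Z A1A Z1_large A1_large cutsA1]]] := halving_step Z_ge2 cutsA.
have [Z' [A' [Z'Z1 A'A1 Z'_large A'_large uncutA']]] := IH Z1 A1 cutsA1.
exists Z', A'; split => //.
- exact: subset_trans Z'Z1 Z1Z.
- exact: subset_trans A'A1 A1A.
- by rewrite expnS -mulnA; apply: leq_trans Z1_large _; rewrite leq_mul2l Z'_large orbT.
- by rewrite expnS -mulnA; apply: leq_trans A1_large _; rewrite leq_mul2l A'_large orbT.
Qed.

End Halving.

Section Cheeses.
Variable T : finType.
Implicit Types (s : seq ({set T} * seq {set T})) (Psi : {set {set T}}).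

Definition cheese_balls s : seq {set T} := flatten [seq c.1 :: c.2 | c <- s].

Lemma size_cheese_balls s : size (cheese_balls s) = \sum_(c <- s) cheese_size c.
Proof. by rewrite size_flatten /shape -map_comp sumnE big_map. Qed.

Lemma cheese_balls_sub Psi s :
  (forall c, c \in s -> c.1 \in Psi /\ (forall H, H \in c.2 -> H \in Psi)) ->
  {subset cheese_balls s <= Psi}.
Proof.
move=> ballsP B /flattenP[_ /mapP[c cs ->]]; have [outerP holesP] := ballsP c cs.
by rewrite inE => /predU1P[-> | /holesP].
Qed.

Lemma eq_mem_bigcup_seq (I : eqType) (r : seq I) (F : I -> {set T}) y y' :
  (forall i, i \in r -> (y \in F i) = (y' \in F i)) ->
  (y \in \bigcup_(i <- r) F i) = (y' \in \bigcup_(i <- r) F i).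
Proof.
move=> agree; rewrite big_seq; apply: (big_ind (fun U : {set T} => (y \in U) = (y' \in U))).
- by rewrite !inE.
- by move=> U V; rewrite !in_setU => -> ->.
- exact: agree.
Qed.

Lemma mem_cheeses_eq s y y' :
  (forall B, B \in cheese_balls s -> (y \in B) = (y' \in B)) ->
  (y \in \bigcup_(c <- s) swiss_cheese c) = (y' \in \bigcup_(c <- s) swiss_cheese c).
Proof.
move=> agree; apply: eq_mem_bigcup_seq => c cs.
have ball_c B : B \in c.1 :: c.2 -> B \in cheese_balls s.
  by move=> Bc; apply/flattenP; exists (c.1 :: c.2); rewrite ?(map_f (fun c => c.1 :: c.2)).
rewrite /swiss_cheese !in_setD (agree c.1) ?ball_c ?mem_head //.
congr (~~ _ && _).
by apply: eq_mem_bigcup_seq => H Hc; rewrite agree ?ball_c // inE Hc orbT.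
Qed.

End Cheeses.

Lemma vcmin_complexity_balls (X Y : finType) (E : X -> Y -> bool) (N : nat) :
  vcmin_complexity_lt E N ->
  exists (Psi : {set {set Y}}) (S : X -> {set {set Y}}),
    [/\ directed_family Psi, forall a, S a \subset Psi, forall a, #|S a| < N
      & forall a y y', (forall B, B \in S a -> (y \in B) = (y' \in B)) -> E a y = E a y'].
Proof.
move=> [Psi [dirPsi cheeses]]; have [cs csP] := fin_all_exists cheeses.
exists Psi, (fun a => [set B in cheese_balls (cs a)]).
split=> // a; have [ballsP _ nbhdE sizeE] := csP a.
- by apply/subsetP => B; rewrite inE; apply: cheese_balls_sub.
- by rewrite cardsE; apply: leq_ltn_trans (card_size _) _; rewrite size_cheese_balls.
move=> y y' agree.
have nbhd_mem z : E a z = (z \in nbhd E a) by rewrite inE.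
by rewrite !nbhd_mem nbhdE; apply: mem_cheeses_eq => B Bs; rewrite agree ?inE.
Qed.

Lemma double_leq_exp2 m : 2 * m <= 2 ^ m.
Proof. by elim: m => // [[|m]] IH //; rewrite expnS; lia. Qed.

Lemma exists_log2_bound N : 0 < N -> exists d, N <= 2 ^ d /\ 2 * d <= N + 1.
Proof.
move=> N_gt0; have [N_le1 | N_gt1] := leqP N 1; first by exists 0; rewrite expn0; split; lia.
have /andP[lt_pred le_d] := up_log_bounds (leqnn 2) N_gt1.
exists (up_log 2 N); split => //.
have := double_leq_exp2 (up_log 2 N).-1; have := up_log_gt0 2 N; rewrite N_gt1 /=; lia.
Qed.

Lemma exp3_leq_exp2_double d : 3 ^ d <= 2 ^ (2 * d).
Proof. by elim: d => // d IH; rewrite expnS mulnS expnD; apply: leq_mul. Qed.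

Lemma scaled_card_le (K m k : nat) :
  m <= 2 ^ K * k -> (1 / 2 ^+ K * m%:R <= k%:R :> rat)%R.
Proof.
move=> m_le; rewrite mul1r mulrC ler_pdivrMr ?exprn_gt0 //.
by rewrite -natrX -natrM ler_nat mulnC.
Qed.

Local Open Scope ring_scope.

Theorem theorem3p1 (N : nat) (X Y : finType) (E : X -> Y -> bool) :
  (1 <= N)%N ->
  vcmin_complexity_lt E N ->
  let kN : rat := 1 / (2 ^+ (N + 4)) in
  exists (X' : {set X}) (Y' : {set Y}),
    [/\ kN * (#|X|)%:R <= (#|X'|)%:R,
        kN * (#|Y|)%:R <= (#|Y'|)%:R
      & (forall x y, x \in X' -> y \in Y' -> E x y) \/
        (forall x y, x \in X' -> y \in Y' -> ~~ E x y)].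
Proof.
move=> N_gt0 /vcmin_complexity_balls[Psi [S [dirPsi SPsi S_small S_det]]] kN.
have [d [N_le d_le]] := exists_log2_bound N_gt0.
have cutsY a : a \in [set: X] -> (#|cutset (S a) [set: Y]| < 2 ^ d)%N.
  move=> _; apply: leq_ltn_trans (leq_trans (S_small a) N_le).
  by apply/subset_leq_card/subsetP => B; rewrite inE => /andP[].
have [Z [A [_ _ Y_le X_le uncut]]] := uncut_subrectangle dirPsi SPsi cutsY.
have E_const a y y' : a \in A -> y \in Z -> y' \in Z -> E a y = E a y'.
  move=> aA yZ y'Z; apply: S_det => B BSa.
  exact: uncut_mem_eq (uncut a B aA BSa) yZ y'Z.
have [b A_half] := majority_half A (fun a => [exists y in Z, E a y]).
exists [set a in A | [exists y in Z, E a y] == b], Z; split.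
- apply: scaled_card_le; rewrite -cardsT; apply: leq_trans X_le _.
  apply: leq_trans (leq_mul (leqnn _) A_half) _; rewrite mulnA -expnSr leq_mul2r.
  by rewrite leq_pexp2l ?orbT //; lia.
- apply: scaled_card_le; rewrite -cardsT; apply: leq_trans Y_le _.
  rewrite leq_mul2r (leq_trans (exp3_leq_exp2_double d)) ?orbT //.
  by rewrite leq_pexp2l //; lia.
case: b {A_half} => [|]; [left | right] => x y; rewrite inE => /andP[xA].
  by move=> /eqP/exists_inP[z zZ Exz] yZ; rewrite (E_const x y z xA yZ zZ).
by rewrite eqbF_neg => /exists_inPn Enone yZ; apply: Enone.
Qed.
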